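(* Let $p_{\mathcal I}$ denote the depth of the cluster tree $\mathcal T_{\mathcal I}$. Then $$W_{\rm mm}(t_0,s_0,r_0)\le C_{\rm mm}k^2(p_{\mathcal I}+1)(\#\hat t_0+\#\hat s_0+\#\hat r_0)\quad\text{for all }(t_0,s_0,r_0)\in\mathcal T_{\mathcal I\times\mathcal I\times\mathcal I},$$ with $C_{\rm mm}:=C_{\rm sp}^2C_{\rm mb}$.
   Context: $\mathcal T_{\mathcal I}$ is a binary cluster tree for a finite index set $\mathcal I$ (every cluster $t$ has a label $\hat t\subseteq\mathcal I$, the root has label $\mathcal I$, every non-leaf cluster has exactly two sons whose labels disjointly partition $\hat t$). $\mathcal T_{\mathcal I\times\mathcal I}$ is a block tree: its nodes are pairs $(t,s)$ of clusters, its root is the pair of roots, and a non-leaf block $(t,s)$ has sons $\mathrm{sons}^+(t)\times\mathrm{sons}^+(s)$, where $\mathrm{sons}^+(t)=\mathrm{sons}(t)$ if $t$ is not a leaf and $\mathrm{sons}^+(t)=\{t\}$ otherwise. $C_{\rm sp}$ is the sparsity constant: for each cluster $t$, at most $C_{\rm sp}$ clusters $s$ satisfy $(t,s)\in\mathcal T_{\mathcal I\times\mathcal I}$, and at most $C_{\rm sp}$ clusters $s$ satisfy $(s,t)\in\mathcal T_{\mathcal I\times\mathcal I}$. Matrices are $\mathcal H^2$-matrices of local rank $k$ on this block tree. $W_{\rm mm}(t,s,r)$, for $(t,s),(s,r)\in\mathcal T_{\mathcal I\times\mathcal I}$, is the number of operations of the recursive algorithm performing $Z|_{\hat t\times\hat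 r}\gets Z|_{\hat t\times\hat r}+X|_{\hat t\times\hat s}Y|_{\hat s\times\hat r}$: if neither $(t,s)$ nor $(s,r)$ is a leaf, it recurses over all $(t',s',r')\in\mathrm{sons}^+(t)\times\mathrm{sons}^+(s)\times\mathrm{sons}^+(r)$ (if $(t,r)$ is a leaf, the results go into temporary submatrices that are then added to $Z|_{\hat t\times\hat r}$ by local low-rank updates); otherwise the product is a low-rank matrix computed in factorized form and added by a local low-rank update. The triple tree $\mathcal T_{\mathcal I\times\mathcal I\times\mathcal I}$ has root (root,root,root); a triple $(t,s,r)$ with $(t,s)$ and $(s,r)$ both non-leaves has sons $\mathrm{sons}^+(t)\times\mathrm{sons}^+(s)\times\mathrm{sons}^+(r)$, and otherwise no sons. $C_{\rm mb}$ is a constant such that $W_{\rm mm}(t,s,r)\le C_{\rm mb}k^2(\#\hat t+\#\hat s+\#\hat r)$ if $(t,s)$ or $(s,r)$ is a leaf, and $W_{\rm mm}(t,s,r)\le C_{\rm mb}k^2(\#\hat t+\#\hat s+\#\hat r)+\sum_{t'\in\mathrm{sons}^+(t),s'\in\mathrm{sons}^+(s),r'\in\mathrm{sons}^+(r)}W_{\rm mm}(t',s',r')$ otherwise. *)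

From mathcomp Require Import all_boot all_order all_algebra.
Set Implicit Arguments. Unset Strict Implicit. Unset Printing Implicit Defensive.
Import Order.TTheory GRing.Theory Num.Theory.

(* A labelled binary tree; the label of a node is its index subset \hat t. *)
Inductive ctree (I : finType) : Type :=
| CLeaf of {set I}
| CNode of {set I} & ctree I & ctree I.

Section ClusterTree.
Variable I : finType.

Definition clabel (u : ctree I) : {set I} :=
  match u with CLeaf s => s | CNode s _ _ => s end.

Fixpoint ctree_wf (u : ctree I) : bool :=
  match u with
  | CLeaf _ => true
  | CNode s l r =>
      [&& clabel l :|: clabel r == s, [disjoint clabel l & clabel r],
          ctree_wf l & ctree_wf r]
  end.

Definition is_cluster_tree (T : ctree I) : bool :=
  ctree_wf T && (clabel T == setT).

(* depth p_I of the tree (root has level 0) *)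
Fixpoint depth (u : ctree I) : nat :=
  match u with
  | CLeaf _ => 0
  | CNode _ l r => (maxn (depth l) (depth r)).+1
  end.

(* Clusters are identified with their positions in the tree, i.e. paths from
   the root (false = first son, true = second son). *)
Fixpoint node (u : ctree I) (p : seq bool) : option (ctree I) :=
  match p, u with
  | [::], _ => Some u
  | b :: p', CNode _ l r => node (if b then r else l) p'
  | _ :: _, CLeaf _ => None
  end.

Definition is_cluster (T : ctree I) (t : seq bool) : bool := node T t.

Definition hat (T : ctree I) (t : seq bool) : {set I} :=
  match node T t with Some u => clabel u | None => set0 end.

Definition is_leaf (T : ctree I) (t : seq bool) : bool :=
  match node T t with Some (CLeaf _) => true | _ => false end.

Definition sonsp (T : ctree I) (t : seq bool) : seq (seq bool) :=
  match node T t with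
  | Some (CNode _ _ _) => [:: rcons t false; rcons t true]
  | _ => [:: t]
  end.

(* Block tree determined by the predicate [bleaf] telling which blocks are
   leaves: root (root,root), sons of a non-leaf block are sons^+ x sons^+. *)
Inductive in_btree (T : ctree I) (bleaf : seq bool -> seq bool -> bool)
  : seq bool -> seq bool -> Prop :=
| bt_root : in_btree T bleaf [::] [::]
| bt_son t s t' s' : in_btree T bleaf t s -> ~~ bleaf t s ->
    t' \in sonsp T t -> s' \in sonsp T s -> in_btree T bleaf t' s'.

(* well-formedness of a block tree: a block of two leaf clusters has no sons
   (otherwise it would be its own son) *)
Definition is_block_tree (T : ctree I) (bleaf : seq bool -> seq bool -> bool)
  : Prop :=
  forall t s, in_btree T bleaf t s -> is_leaf T t -> is_leaf T s -> bleaf t s.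

Definition sparse (T : ctree I) (bleaf : seq bool -> seq bool -> bool)
  (Csp : nat) : Prop :=
  (forall t (ss : seq (seq bool)), uniq ss ->
     (forall s, s \in ss -> in_btree T bleaf t s) -> size ss <= Csp)%N /\
  (forall t (ss : seq (seq bool)), uniq ss ->
     (forall s, s \in ss -> in_btree T bleaf s t) -> size ss <= Csp)%N.

Inductive in_ttree (T : ctree I) (bleaf : seq bool -> seq bool -> bool)
  : seq bool -> seq bool -> seq bool -> Prop :=
| tt_root : in_ttree T bleaf [::] [::] [::]
| tt_son t s r t' s' r' : in_ttree T bleaf t s r ->
    ~~ bleaf t s -> ~~ bleaf s r ->
    t' \in sonsp T t -> s' \in sonsp T s -> r' \in sonsp T r ->
    in_ttree T bleaf t' s' r'.

End ClusterTree.

From mathcomp Require Import all_boot all_order all_algebra.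
Import Order.TTheory GRing.Theory Num.Theory.
From mathcomp Require Import ring.
Set Implicit Arguments. Unset Strict Implicit. Unset Printing Implicit Defensive.

(* Unfolding the recursion bounds W(t0,s0,r0) by Cmb k^2 times the sum of
   #t + #s + #r over all descendants (t,s,r) of (t0,s0,r0) in the triple tree.
   Group the descendants by generation; since a block of two leaves is a leaf,
   there are at most p_I + 1 nonempty generations.  The clusters t occurring in
   one generation are clusters of one level (or leaves above it), hence
   pairwise disjoint subsets of t0, and each of them occurs in at most Csp^2
   triples, because (t,s) and (s,r) are blocks.  So a generation contributes at
   most Csp^2 #t0, and likewise for s and r. *)

(* [sparse T bleaf Csp] unfolds to [at_most Csp] for every row and column of
   the block tree. *)
Definition at_most (A : eqType) (n : nat) (Q : A -> Prop) :=
  forall bs : seq A, uniq bs -> (forall b, b \in bs -> Q b) -> (size bs <= n)%N.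

Lemma at_most_pair (A B : eqType) (Q1 : A -> Prop) (Q2 : A -> B -> Prop) n1 n2 :
  at_most n1 Q1 -> (forall a, at_most n2 (Q2 a)) ->
  at_most (n1 * n2) (fun p : A * B => Q1 p.1 /\ Q2 p.1 p.2).
Proof.
move=> H1 H2 ps Ups Hps.
set As := undup (map fst ps).
pose Bs a := undup [seq p.2 | p <- ps & p.1 == a].
have sub_ps : {subset ps <= [seq (a, b) | a <- As, b <- Bs a]}.
  move=> [a b] pab; apply/allpairsPdep; exists a, b; split => //.
    by rewrite mem_undup (map_f fst pab).
  by rewrite mem_undup; apply/mapP; exists (a, b); rewrite ?mem_filter ?eqxx.
apply: (leq_trans (uniq_leq_size Ups sub_ps)).
rewrite size_allpairs_dep sumnE big_map.
apply: (@leq_trans (\sum_(a <- As) n2)).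
  apply: leq_sum => a _; apply: (H2 a); first exact: undup_uniq.
  move=> b; rewrite mem_undup => /mapP [p]; rewrite mem_filter => /andP [/eqP <- pps] ->.
  by case: (Hps p pps).
rewrite big_const_seq iter_addn_0 count_predT mulnC leq_mul2r.
apply/orP; right; apply: H1; first exact: undup_uniq.
by move=> a; rewrite mem_undup => /mapP [p pps ->]; case: (Hps p pps).
Qed.

Lemma sum_le_fiber_count (A B : eqType) (L : seq A) (f : A -> B) (F : B -> nat) m :
  (forall b, count (fun x => f x == b) L <= m)%N ->
  (\sum_(x <- L) F (f x) <= m * \sum_(b <- undup (map f L)) F b)%N.
Proof.
move=> Hm; rewrite -(big_map f xpredT) -big_undup_iterop_count big_distrr.
apply: leq_sum => b _.
by rewrite Monoid.iteropE iter_addn_0 mulnC leq_mul2r count_map Hm orbT.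
Qed.

Lemma flatten_map_uniq (A B : eqType) (L : seq A) (F : A -> seq B) :
  uniq L -> {in L, forall x, uniq (F x)} ->
  (forall x x' y, x \in L -> x' \in L -> y \in F x -> y \in F x' -> x = x') ->
  uniq (flatten (map F L)).
Proof.
elim: L => [|x L IH] //= /andP[xL UL] UF Inj.
rewrite cat_uniq UF ?mem_head //= IH //; first last.
- by move=> a a' y Ha Ha'; apply: Inj; rewrite inE ?Ha ?Ha' orbT.
- by move=> a Ha; apply: UF; rewrite inE Ha orbT.
rewrite andbT; apply/hasP => -[y /flattenP [ys /mapP [x' x'L ->] yx'] yx].
by move: xL; rewrite (Inj x x' y (mem_head _ _) _ yx yx') ?x'L // inE x'L orbT.
Qed.

Section ClusterTree.
Variable I : finType.
Implicit Types (u v : ctree I) (p q : seq bool).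

Lemma node_nil u : node u [::] = Some u.
Proof. by case: u. Qed.

Lemma node_cat u p q : node u (p ++ q) = obind (fun v => node v q) (node u p).
Proof. by elim: p u => [|b p IH] [s|s l r] //=. Qed.

Lemma node_wf u p v : ctree_wf u -> node u p = Some v ->
  ctree_wf v /\ clabel v \subset clabel u.
Proof.
elim: p u => [|b p IH] [s|s l r] //=; try by move=> wu [<-].
case/and4P=> /eqP <- _ wl wr.
have wb : ctree_wf (if b then r else l) by case: b.
move=> /(IH _ wb) [wv sub].
split=> //; apply: (subset_trans sub).
by case: b {sub wb}; [apply: subsetUr | apply: subsetUl].
Qed.

Lemma node_depth u p v : node u p = Some v -> (size p + depth v <= depth u)%N.
Proof.
elim: p u => [|b p IH] [s|s l r] //=; try by move=> [<-].
move=> /IH le_pv; rewrite addSn ltnS (leq_trans le_pv) //.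
by case: b {le_pv}; [apply: leq_maxr | apply: leq_maxl].
Qed.

Lemma prefix_or_branch p q : [\/ prefix p q, prefix q p |
  exists r c p' q', p = r ++ c :: p' /\ q = r ++ ~~ c :: q'].
Proof.
elim: p q => [|x p IH] [|y q]; rewrite ?prefix0s; try by constructor.
have [<-|neq_xy] := eqVneq x y; last first.
  apply: Or33; exists [::], x, p, q; split=> //.
  by case: x y neq_xy => -[].
case: (IH q) => [pq|qp|[r [c [p' [q' [-> ->]]]]]]; rewrite /= eqxx.
- by apply: Or31.
- by apply: Or32.
- by apply: Or33; exists (x :: r), c, p', q'.
Qed.

End ClusterTree.

Section Levels.
Variables (I : finType) (T : ctree I).
Hypothesis wfT : ctree_wf T.
Implicit Types (c p q : seq bool).

Lemma hat_prefix p q : prefix p q -> hat T q \subset hat T p.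
Proof.
case/prefixP=> q' ->; rewrite /hat node_cat.
case Ep: (node T p) => [v|] //=; case Eq: (node v q') => [w|]; last exact: sub0set.
have [wv _] := node_wf wfT Ep.
by have [] := node_wf wv Eq.
Qed.

Lemma hat_branch_disjoint r (b : bool) p q :
  [disjoint hat T (r ++ b :: p) & hat T (r ++ ~~ b :: q)].
Proof.
have catr b' s : r ++ b' :: s = rcons r b' ++ s by rewrite -cats1 -catA.
have sub_hat b' s : hat T (rcons r b' ++ s) \subset hat T (rcons r b').
  by apply/hat_prefix/prefix_catl/prefix_refl.
rewrite !catr (disjointW (sub_hat _ _) (sub_hat _ _)) //.
rewrite /hat -!cats1 !node_cat; case Er: (node T r) => [[s|s l l']|] //=;
  rewrite ?node_nil -?setI_eq0 ?set0I //.
have [/and4P [_ disj _ _] _] := node_wf wfT Er.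
by case: b; rewrite /= ?node_nil ?[clabel l' :&: _]setIC setI_eq0.
Qed.

(* Clusters of level M together with the leaves of smaller level: the
   clusters met in one generation of the triple tree all lie in one such set. *)
Definition in_level M c :=
  is_cluster T c && ((size c == M) || (size c < M)%N && is_leaf T c).

Lemma sonsp_prefix c c' : c' \in sonsp T c -> prefix c c'.
Proof.
rewrite /sonsp; case: (node T c) => [[s|s l r]|]; rewrite ?inE;
  try by move/eqP->; rewrite prefix_refl.
by case/orP=> /eqP->; rewrite prefix_rcons.
Qed.

Lemma sonsp_uniq c : uniq (sonsp T c).
Proof.
by rewrite /sonsp; case: (node T c) => [[s|s l r]|] //=; rewrite inE eqseq_rcons andbF.
Qed.

Lemma sonsp_in_level M c c' : in_level M c -> c' \in sonsp T c -> in_level M.+1 c'.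
Proof.
rewrite /in_level /sonsp /is_cluster /is_leaf.
case Ec: (node T c) => [[s|s l r]|] //= lev; rewrite ?inE.
- move=> /eqP ->; rewrite Ec /= ltnS eqn_leq.
  by case/orP: lev => [/eqP-> | /andP[/ltnW-> _]]; rewrite ?leqnn ?andbT ?orbT.
- case/orP: lev => [/eqP sc | /andP[_ //]].
  by case/orP=> /eqP ->; rewrite -cats1 node_cat Ec /= node_nil size_cat sc addn1 eqxx.
Qed.

Lemma take_sonsp M c c' : in_level M c -> c' \in sonsp T c -> take M c' = c.
Proof.
rewrite /in_level /sonsp /is_cluster /is_leaf.
case Ec: (node T c) => [[s|s l r]|] //= lev; rewrite ?inE.
- move=> /eqP ->; apply: take_oversize.
  by case/orP: lev => [/eqP-> | /andP[/ltnW-> _]].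
- case/orP: lev => [/eqP <- | /andP[_ //]].
  by case/orP=> /eqP ->; rewrite -cats1 take_size_cat.
Qed.

Lemma in_level_leaf M c : (depth T <= M)%N -> in_level M c -> is_leaf T c.
Proof.
rewrite /in_level /is_cluster /is_leaf; case Ec: (node T c) => [[s|s l r]|] //=.
move=> le_dM /orP [/eqP sc | /andP[_ //]].
by have := node_depth Ec; rewrite sc /= addnS ltnNge (leq_trans le_dM) ?leq_addr.
Qed.

Lemma in_level_prefix M c q : in_level M c -> in_level M (c ++ q) -> q = [::].
Proof.
case/andP=> _ /orP [/eqP sc | /andP[_ leaf_c]].
  case/andP=> _ /orP [/eqP | /andP[]]; rewrite size_cat sc.
    by rewrite -{2}[M]addn0 => /addnI /eqP; rewrite size_eq0 => /eqP.
  by rewrite ltnNge leq_addr.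
move: leaf_c; rewrite /in_level /is_leaf /is_cluster node_cat.
by case: (node T c) => [[s|s l r]|] //= _; case: q.
Qed.

Lemma in_level_disjoint M a b : in_level M a -> in_level M b -> a != b ->
  [disjoint hat T a & hat T b].
Proof.
move=> la lb; case: (prefix_or_branch a b) => [/prefixP [q Eb] | /prefixP [q Ea] |].
- by move: lb; rewrite Eb => /(in_level_prefix la) ->; rewrite cats0 eqxx.
- by move: la; rewrite Ea => /(in_level_prefix lb) ->; rewrite cats0 eqxx.
- by case=> r [c [p [q [-> ->]]]] _; apply: hat_branch_disjoint.
Qed.

Lemma sum_card_in_level M (cs : seq (seq bool)) (S : {set I}) : uniq cs ->
  (forall c, c \in cs -> in_level M c /\ hat T c \subset S) ->
  (\sum_(c <- cs) #|hat T c| <= #|S|)%N.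
Proof.
elim: cs S => [|c cs IH] S; first by rewrite big_nil.
case/andP=> c_cs Ucs Hcs; rewrite big_cons.
have [lc subc] := Hcs c (mem_head _ _).
rewrite -(cardsID (hat T c) S) (setIidPr subc) leq_add2l IH // => d d_cs.
have [ld subd] : in_level M d /\ hat T d \subset S by apply: Hcs; rewrite inE d_cs orbT.
rewrite subsetD subd disjoint_sym (in_level_disjoint lc ld) //.
by apply: contraNneq c_cs => ->.
Qed.

End Levels.

Section TripleTree.
Variables (I : finType) (T : ctree I) (bleaf : seq bool -> seq bool -> bool).
Hypothesis wfT : ctree_wf T.

Definition triple := (seq bool * seq bool * seq bool)%type.

Definition tsons (x : triple) : seq triple :=
  let: (t, s, r) := x in
  if ~~ bleaf t s && ~~ bleaf s r then
    [seq (ts, r') | ts <- [seq (t', s') | t' <- sonsp T t, s' <- sonsp T s],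
                    r' <- sonsp T r]
  else [::].

Lemma mem_tsons t s r y : y \in tsons (t, s, r) ->
  [/\ ~~ bleaf t s, ~~ bleaf s r, y.1.1 \in sonsp T t,
      y.1.2 \in sonsp T s & y.2 \in sonsp T r].
Proof.
rewrite /tsons; case: ifP => // /andP [nts nsr].
by case/allpairsP=> -[ts r'] [/allpairsP [[t' s'] [/= ? ? ->]] ? ->].
Qed.

Lemma tsons_uniq x : uniq (tsons x).
Proof.
case: x => [[t s] r] /=; case: ifP => // _.
by rewrite !allpairs_uniq ?sonsp_uniq // => -[? ?] [? ?] _ _ [-> ->].
Qed.

Lemma ttree_btree t s r : in_ttree T bleaf t s r ->
  in_btree T bleaf t s /\ in_btree T bleaf s r.
Proof.
elim=> [|{}t {}s {}r t' s' r' _ [ts sr] nts nsr t't s's r'r].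
  by split; apply: bt_root.
by split; [apply: (bt_son ts nts t't s's) | apply: (bt_son sr nsr s's r'r)].
Qed.

Definition tin_level M (y : triple) :=
  [/\ in_level T M y.1.1, in_level T M y.1.2 & in_level T M y.2].

Lemma ttree_in_level t s r : in_ttree T bleaf t s r ->
  exists M, tin_level M (t, s, r).
Proof.
elim=> [|{}t {}s {}r t' s' r' _ [M [lt ls lr]] _ _ t't s's r'r].
  by exists 0%N; rewrite /tin_level /in_level /is_cluster node_nil.
by exists M.+1; split; [apply: sonsp_in_level lt t't | apply: sonsp_in_level ls s's
                      | apply: sonsp_in_level lr r'r].
Qed.

Definition generation (x0 : triple) n :=
  iter n (fun L => flatten (map tsons L)) [:: x0].

Definition tsize (y : triple) :=
  (#|hat T y.1.1| + #|hat T y.1.2| + #|hat T y.2|)%N.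

Section Generations.
Variables (x0 : triple) (M Csp : nat).
Hypotheses (x0_ttree : in_ttree T bleaf x0.1.1 x0.1.2 x0.2)
  (x0_level : tin_level M x0).

Definition descends (y : triple) :=
  [/\ prefix x0.1.1 y.1.1, prefix x0.1.2 y.1.2 & prefix x0.2 y.2].

Lemma generation_spec n : uniq (generation x0 n) /\
  {in generation x0 n, forall y,
     [/\ in_ttree T bleaf y.1.1 y.1.2 y.2, tin_level (M + n) y & descends y]}.
Proof.
elim: n => [|n [U spec]].
  split=> // y; rewrite inE addn0 => /eqP ->.
  by split=> //; split; apply: prefix_refl.
split.
- apply: flatten_map_uniq => // [x _|]; first exact: tsons_uniq.
  move=> [[t s] r] [[t' s'] r'] y /spec [_ [lt ls lr] _] /spec [_ [lt' ls' lr'] _].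
  move=> /mem_tsons [_ _ yt ys yr] /mem_tsons [_ _ yt' ys' yr'].
  rewrite /= in lt ls lr lt' ls' lr'.
  by rewrite -(take_sonsp lt yt) -(take_sonsp ls ys) -(take_sonsp lr yr)
    (take_sonsp lt' yt') (take_sonsp ls' ys') (take_sonsp lr' yr').
- move=> y /flattenP [ys /mapP [[[t s] r] /spec [xt [lt ls lr] [pt ps pr]] ->]].
  rewrite /= in xt lt ls lr pt ps pr.
  move=> /mem_tsons [nts nsr yt ys' yr]; rewrite addnS; split.
  + exact: tt_son xt nts nsr yt ys' yr.
  + by split; [apply: sonsp_in_level lt yt | apply: sonsp_in_level ls ys'
               | apply: sonsp_in_level lr yr].
  + by split; [apply: prefix_trans pt (sonsp_prefix yt)
              | apply: prefix_trans ps (sonsp_prefix ys')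
              | apply: prefix_trans pr (sonsp_prefix yr)].
Qed.

Lemma generation_sum_card n (f : triple -> seq bool)
  (e : triple -> seq bool * seq bool) (Q : seq bool -> seq bool * seq bool -> Prop) :
  (forall y z, f y = f z -> e y = e z -> y = z) ->
  (forall c, at_most (Csp * Csp) (Q c)) ->
  {in generation x0 n, forall y,
     [/\ in_level T (M + n) (f y), prefix (f x0) (f y) & Q (f y) (e y)]} ->
  (\sum_(y <- generation x0 n) #|hat T (f y)| <= Csp * Csp * #|hat T (f x0)|)%N.
Proof.
move=> inj_fe Qsparse spec; have [U _] := generation_spec n.
apply: (@leq_trans (Csp * Csp * \sum_(c <- undup (map f (generation x0 n))) #|hat T c|)).
  apply: sum_le_fiber_count => c; rewrite -size_filter -(size_map e).
  apply: (Qsparse c) => [|p /mapP [y]]; last first.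
    by rewrite mem_filter => /andP [/eqP <- /spec [_ _ ?]] ->.
  rewrite map_inj_in_uniq ?filter_uniq // => y z.
  by rewrite !mem_filter => /andP [/eqP fy _] /andP [/eqP fz _]; apply/inj_fe; rewrite fy fz.
rewrite leq_mul2l (sum_card_in_level wfT (M := M + n)) ?undup_uniq ?orbT //.
move=> c; rewrite mem_undup => /mapP [y /spec [ly py _] ->].
by split=> //; apply: hat_prefix.
Qed.

Lemma generation_sum_tsize n : sparse T bleaf Csp ->
  (\sum_(y <- generation x0 n) tsize y <= Csp * Csp * tsize x0)%N.
Proof.
case=> sp1 sp2; have [_ spec] := generation_spec n.
rewrite /tsize !big_split !mulnDr /=; apply: leq_add; first apply: leq_add.
- apply: (generation_sum_card (e := fun y => (y.1.2, y.2))
    (Q := fun t p => in_btree T bleaf t p.1 /\ in_btree T bleaf p.1 p.2)).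
  + by move=> [[? ?] ?] [[? ?] ?] /= -> [-> ->].
  + by move=> t; apply: at_most_pair (sp1 t) sp1.
  + by move=> y /spec [/ttree_btree [ts sr] [lt _ _] [pt _ _]].
- apply: (generation_sum_card (e := fun y => (y.1.1, y.2))
    (Q := fun s p => in_btree T bleaf p.1 s /\ in_btree T bleaf s p.2)).
  + by move=> [[? ?] ?] [[? ?] ?] /= -> [-> ->].
  + by move=> s; apply: at_most_pair (sp2 s) (fun=> sp1 s).
  + by move=> y /spec [/ttree_btree [ts sr] [_ ls _] [_ ps _]].
- apply: (generation_sum_card (e := fun y => (y.1.2, y.1.1))
    (Q := fun r p => in_btree T bleaf p.1 r /\ in_btree T bleaf p.2 p.1)).
  + by move=> [[? ?] ?] [[? ?] ?] /= -> [-> ->].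
  + by move=> r; apply: at_most_pair (sp2 r) sp2.
  + by move=> y /spec [/ttree_btree [ts sr] [_ _ lr] [_ _ pr]].
Qed.

Lemma generation_after_depth : is_block_tree T bleaf ->
  generation x0 (depth T).+1 = [::].
Proof.
move=> blockT; have [_ spec] := generation_spec (depth T).
rewrite /= -/(generation x0 _) (eq_in_map _ (fun=> [::]) _).1;
  first by elim: (generation x0 _).
move=> [[t s] r] /spec [/ttree_btree [ts _] [lt ls _] _] /=.
by rewrite (blockT _ _ ts) ?(in_level_leaf _ lt) ?(in_level_leaf _ ls) ?leq_addl.
Qed.

End Generations.
End TripleTree.

Section RecursiveCost.
Local Open Scope ring_scope.
Variables (R : realFieldType) (I : finType) (T : ctree I).
Variables (bleaf : seq bool -> seq bool -> bool) (Cmb : R) (k : nat).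
Variable W : seq bool -> seq bool -> seq bool -> nat.
Hypothesis W_leaf : forall t s r, in_btree T bleaf t s -> in_btree T bleaf s r ->
  bleaf t s || bleaf s r ->
  (W t s r)%:R <= Cmb * (k ^ 2)%:R * (#|hat T t| + #|hat T s| + #|hat T r|)%:R.
Hypothesis W_node : forall t s r, in_btree T bleaf t s -> in_btree T bleaf s r ->
  ~~ bleaf t s -> ~~ bleaf s r ->
  (W t s r)%:R <= Cmb * (k ^ 2)%:R * (#|hat T t| + #|hat T s| + #|hat T r|)%:R
    + (\sum_(t' <- sonsp T t) \sum_(s' <- sonsp T s)
         \sum_(r' <- sonsp T r) W t' s' r')%:R.

Definition tcost (y : triple) : R := (W y.1.1 y.1.2 y.2)%:R.

Lemma tcost_le_tsons y : in_ttree T bleaf y.1.1 y.1.2 y.2 ->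
  tcost y <= Cmb * (k ^ 2)%:R * (tsize T y)%:R + \sum_(z <- tsons T bleaf y) tcost z.
Proof.
case: y => [[t s] r] /= /ttree_btree [ts sr]; rewrite /tcost /=.
case: ifP => [/andP [nts nsr] | /negbT]; last first.
  by rewrite negb_and !negbK big_nil addr0; apply: W_leaf.
rewrite (le_trans (W_node ts sr nts nsr)) // lerD2l !big_allpairs /=.
rewrite natr_sum ler_sum // => t' _; rewrite natr_sum ler_sum // => s' _.
by rewrite natr_sum.
Qed.

Lemma tcost_le_generations (x0 : triple) M n :
  in_ttree T bleaf x0.1.1 x0.1.2 x0.2 -> tin_level T M x0 ->
  tcost x0 <= \sum_(i < n) Cmb * (k ^ 2)%:R
                             * (\sum_(y <- generation T bleaf x0 i) tsize T y)%:R
              + \sum_(y <- generation T bleaf x0 n) tcost y.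
Proof.
move=> x0_ttree x0_level; elim: n => [|n IH].
  by rewrite big_ord0 add0r big_seq1.
have [_ spec] := generation_spec x0_ttree x0_level n.
rewrite (le_trans IH) // big_ord_recr -addrA lerD2l /= big_flatten big_map.
rewrite natr_sum mulr_sumr -big_split /= !big_seq.
by apply: ler_sum => y /spec [y_ttree _ _]; apply: tcost_le_tsons.
Qed.

End RecursiveCost.
Local Open Scope ring_scope.

Theorem mainTheorem2 (R : realFieldType) (I : finType) (T : ctree I)
  (bleaf : seq bool -> seq bool -> bool) (Csp k : nat) (Cmb : R)
  (W : seq bool -> seq bool -> seq bool -> nat) :
  is_cluster_tree T ->
  is_block_tree T bleaf ->
  sparse T bleaf Csp ->
  0 <= Cmb ->
  (forall t s r, in_btree T bleaf t s -> in_btree T bleaf s r ->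
     bleaf t s || bleaf s r ->
     (W t s r)%:R <= Cmb * (k ^ 2)%:R
                     * (#|hat T t| + #|hat T s| + #|hat T r|)%:R) ->
  (forall t s r, in_btree T bleaf t s -> in_btree T bleaf s r ->
     ~~ bleaf t s -> ~~ bleaf s r ->
     (W t s r)%:R <= Cmb * (k ^ 2)%:R
                     * (#|hat T t| + #|hat T s| + #|hat T r|)%:R
       + (\sum_(t' <- sonsp T t) \sum_(s' <- sonsp T s)
            \sum_(r' <- sonsp T r) W t' s' r')%:R) ->
  forall t0 s0 r0, in_ttree T bleaf t0 s0 r0 ->
    (W t0 s0 r0)%:R <=
      ((Csp ^ 2)%:R * Cmb) * (k ^ 2)%:R * (depth T).+1%:R
        * (#|hat T t0| + #|hat T s0| + #|hat T r0|)%:R.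
Proof.
move=> /andP [wfT _] blockT sparseT Cmb_ge0 W_leaf W_node t0 s0 r0 tt0.
pose x0 : triple := (t0, s0, r0).
have x0_ttree : in_ttree T bleaf x0.1.1 x0.1.2 x0.2 := tt0.
have [M x0_level] := ttree_in_level tt0.
have := tcost_le_generations W_leaf W_node (depth T).+1 x0_ttree x0_level.
rewrite (generation_after_depth x0_ttree x0_level) // big_nil addr0.
move=> /le_trans; apply; set c := Cmb * (k ^ 2)%:R.
have -> : (Csp ^ 2)%:R * Cmb * (k ^ 2)%:R * (depth T).+1%:R
            * (#|hat T t0| + #|hat T s0| + #|hat T r0|)%:R
          = \sum_(i < (depth T).+1) c * (Csp * Csp * tsize T x0)%:R.
  by rewrite sumr_const card_ord -[_ *+ _]mulr_natr /c /tsize /= natrX; ring.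
apply: ler_sum => i _; apply: ler_wpM2l; first exact: mulr_ge0.
by rewrite ler_nat (generation_sum_tsize wfT x0_ttree x0_level).
Qed.
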